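(* Let $L=(l_1,l_2,l_3)$ be positive integers with $l_1+l_2+l_3=n$ which are generic and reduced. Then $Tonn^{n,3}(L)$ is a triangulation of the 2-dimensional torus $T^2=(S^1)^2$.
   Context: $L=(l_1,\dots,l_k)$ is generic if for all subsets $I,J\subseteq[k]$, $\sum_{i\in I}l_i=\sum_{j\in J}l_j$ implies $I=J$. $L$ is reduced if $\gcd(l_1,\dots,l_k)=1$. The generalized tonnetz $Tonn^{n,k}(L)$ is the simplicial complex on vertex set $\mathbb{Z}_n$ whose maximal simplices are the sets $\Delta(x;\sigma)=\{x,\,x+l_{\sigma(1)},\dots,x+l_{\sigma(1)}+\dots+l_{\sigma(k-1)}\}$ (sums in $\mathbb{Z}_n$), for $x\in\mathbb{Z}_n$ and $\sigma\in S_k$; its simplices are all subsets of these sets. *)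

From Stdlib Require Import Reals List Arith.
Open Scope R_scope.

(* Index convention: L = (l 0, ..., l (k-1)) (paper: l_1..l_k). *)

Definition subset_sum (k : nat) (l : nat -> nat) (I : nat -> bool) : nat :=
  list_sum (map (fun i => if I i then l i else 0%nat) (seq 0 k)).

Definition generic (k : nat) (l : nat -> nat) : Prop :=
  forall I J : nat -> bool,
    subset_sum k l I = subset_sum k l J -> forall i, (i < k)%nat -> I i = J i.

Definition reduced (k : nat) (l : nat -> nat) : Prop :=
  fold_right Nat.gcd 0%nat (map l (seq 0 k)) = 1%nat.

Definition is_perm (k : nat) (sigma : nat -> nat) : Prop :=
  (forall i, (i < k)%nat -> (sigma i < k)%nat) /\
  (forall i j, (i < k)%nat -> (j < k)%nat -> sigma i = sigma j -> i = j).

Definition psum (l : nat -> nat) (sigma : nat -> nat) (j : nat) : nat :=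
  list_sum (map (fun i => l (sigma i)) (seq 0 j)).

(* v belongs to the maximal simplex Delta(x; sigma) of Tonn^{n,k}(L),
   vertices being the residues 0..n-1 of Z_n *)
Definition in_Delta (n k : nat) (l : nat -> nat) (x : nat) (sigma : nat -> nat)
  (v : nat) : Prop :=
  exists j, (j < k)%nat /\ v = ((x + psum l sigma j) mod n)%nat.

Definition sum_upto (n : nat) (f : nat -> R) : R :=
  fold_right Rplus 0 (map f (seq 0 n)).

(* Geometric realization |Tonn^{n,k}(L)| inside R^{Z_n} (functions nat -> R
   vanishing outside 0..n-1): the union of the closed geometric simplices
   spanned by the simplices of the complex, i.e. convex combinations of
   vertices of some maximal simplex Delta(x;sigma). *)
Definition tonnetz_realization (n k : nat) (l : nat -> nat) (f : nat -> R) : Prop :=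
  (forall v, 0 <= f v) /\
  (forall v, (n <= v)%nat -> f v = 0) /\
  sum_upto n f = 1 /\
  exists x sigma, (x < n)%nat /\ is_perm k sigma /\
    forall v, f v <> 0 -> in_Delta n k l x sigma v.

Definition distn (n : nat) (f g : nat -> R) : R :=
  fold_right Rmax 0 (map (fun v => Rabs (f v - g v)) (seq 0 n)).

Definition R4 : Type := (R * R * (R * R))%type.

Definition torus2 (p : R4) : Prop :=
  let '(a, b, (c, d)) := p in a * a + b * b = 1 /\ c * c + d * d = 1.

Definition dist4 (p q : R4) : R :=
  let '(a, b, (c, d)) := p in let '(a', b', (c', d')) := q in
  Rmax (Rmax (Rabs (a - a')) (Rabs (b - b'))) (Rmax (Rabs (c - c')) (Rabs (d - d'))).

Definition cont_on {X Y : Type} (dX : X -> X -> R) (dY : Y -> Y -> R)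
  (A : X -> Prop) (h : X -> Y) : Prop :=
  forall x, A x -> forall eps, 0 < eps -> exists delta, 0 < delta /\
    forall y, A y -> dX x y < delta -> dY (h x) (h y) < eps.

(* The complex with realization A (in R^{Z_n}) is a triangulation of T^2:
   its geometric realization is homeomorphic to (S^1)^2. *)
Definition triangulates_torus2 (n : nat) (A : (nat -> R) -> Prop) : Prop :=
  exists (h : (nat -> R) -> R4) (g : R4 -> (nat -> R)),
    (forall f, A f -> torus2 (h f)) /\
    (forall p, torus2 p -> A (g p)) /\
    (forall f, A f -> g (h f) = f) /\
    (forall p, torus2 p -> h (g p) = p) /\
    cont_on (distn n) dist4 A h /\
    cont_on dist4 (distn n) torus2 g.

Definition L3 (l1 l2 l3 : nat) (i : nat) : nat :=
  match i with 0 => l1 | 1 => l2 | _ => l3 end.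

(* Sending the lattice point [(w1, w2)] to the vertex [w1 l1 + w2 l2] of [Z_n] maps the
   triangulation of the plane with edge vectors [(1, 0)], [(0, 1)], [(-1, -1)] simplicially
   onto the Tonnetz: the triangle with corners [w], [w + edge a], [w + edge a + edge b] goes to
   a simplex [Delta(x; sigma)].  As [L] is reduced the map is onto, so the Tonnetz is the
   quotient of the plane by the rank-2 lattice of periods [{k | k1 l1 + k2 l2 = 0 mod n}]; as
   [L] is generic the closed star of a lattice point lies over seven distinct vertices, so the
   quotient map is a local isomorphism.  Hence the realization is [R^2 / periods], which a
   basis of the period lattice identifies with [R^2 / Z^2 = T^2].  Concretely, hat functions
   map the plane to the realization, and a point of the realization is lifted back through a
   chart around any of its vertices. *)

From Stdlib Require Import Reals List ZArith Znumtheory Lia Lra FunctionalExtensionality.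
Import ListNotations.
Open Scope R_scope.

Definition Rsum {A : Type} (l : list A) (F : A -> R) : R := fold_right Rplus 0 (map F l).

Section ListSums.

Context {A : Type}.
Implicit Types (l k : list A) (F G : A -> R).

Lemma Rsum_nil F : Rsum [] F = 0.
Proof. reflexivity. Qed.

Lemma Rsum_cons a l F : Rsum (a :: l) F = F a + Rsum l F.
Proof. reflexivity. Qed.

Lemma Rsum_ext_in l F G : (forall x, In x l -> F x = G x) -> Rsum l F = Rsum l G.
Proof. intros H; unfold Rsum; f_equal; apply map_ext_in; auto. Qed.

Lemma Rsum_minus l F G : Rsum l F - Rsum l G = Rsum l (fun x => F x - G x).
Proof. induction l; rewrite ?Rsum_nil, ?Rsum_cons; [ring|]. rewrite <- IHl; ring. Qed.

Lemma Rabs_Rsum l F : Rabs (Rsum l F) <= Rsum l (fun x => Rabs (F x)).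
Proof.
  induction l; rewrite ?Rsum_nil, ?Rsum_cons; [rewrite Rabs_R0; lra|].
  eapply Rle_trans; [apply Rabs_triang|lra].
Qed.

Lemma Rsum_le_const l F c :
  (forall x, In x l -> F x <= c) -> Rsum l F <= INR (length l) * c.
Proof.
  induction l as [|a l IH]; intros H; rewrite ?Rsum_nil, ?Rsum_cons; simpl length; [simpl; lra|].
  rewrite S_INR. specialize (H a (or_introl eq_refl)) as Ha.
  assert (Rsum l F <= INR (length l) * c) by (apply IH; intros; apply H; right; auto).
  lra.
Qed.

Lemma Rsum_map {B : Type} (g : B -> A) (l : list B) F :
  Rsum (map g l) F = Rsum l (fun x => F (g x)).
Proof. unfold Rsum; rewrite map_map; reflexivity. Qed.

Variable dec : forall x y : A, {x = y} + {x <> y}.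

Lemma Rsum_remove a l F : NoDup l -> In a l -> Rsum l F = F a + Rsum (remove dec a l) F.
Proof.
  induction l as [|b l IH]; intros Hl Hin; [destruct Hin|]. inversion Hl; subst. simpl.
  destruct (dec a b) as [<-|Hab].
  - rewrite notin_remove by auto. reflexivity.
  - destruct Hin as [->|Hin]; [congruence|]. rewrite !Rsum_cons, IH by auto. ring.
Qed.

Lemma Rsum_incl l k F :
  NoDup l -> NoDup k -> incl k l -> (forall x, In x l -> ~ In x k -> F x = 0) ->
  Rsum l F = Rsum k F.
Proof.
  revert k; induction l as [|a l IH]; intros k Hl Hk Hkl HF.
  - destruct k as [|b k]; [reflexivity|]. destruct (Hkl b (or_introl eq_refl)).
  - inversion Hl; subst. rewrite Rsum_cons.
    destruct (in_dec dec a k) as [Ha|Ha].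
    + rewrite (Rsum_remove a k F Hk Ha). f_equal. apply IH; auto.
      * rewrite <- remove_alt. apply NoDup_filter; auto.
      * intros x Hx. apply in_remove in Hx as [Hx Hxa].
        destruct (Hkl x Hx) as [->|]; [congruence|auto].
      * intros x Hx Hxk. apply HF; [right; auto|]. intro Hx'. apply Hxk.
        apply in_in_remove; auto. intros ->; contradiction.
    + rewrite (HF a) by (auto; left; auto). rewrite Rplus_0_l. apply IH; auto.
      * intros x Hx. destruct (Hkl x Hx) as [->|]; [contradiction|auto].
      * intros x Hx. apply HF; right; auto.
Qed.

End ListSums.

Fixpoint first_nonzero (f : nat -> R) (l : list nat) : nat :=
  match l with
  | [] => 0%nat
  | v :: l' => if Req_dec_T (f v) 0 then first_nonzero f l' else v
  end.

Lemma first_nonzero_spec f l : Rsum l f <> 0 ->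
  In (first_nonzero f l) l /\ f (first_nonzero f l) <> 0.
Proof.
  induction l as [|v l IH]; simpl; [intros []; reflexivity|].
  rewrite Rsum_cons. destruct (Req_dec_T (f v) 0) as [Hv|Hv]; [|auto].
  rewrite Hv, Rplus_0_l. intros Hl. destruct (IH Hl). auto.
Qed.

Definition dist1 (s s' : R * R) : R := Rabs (fst s - fst s') + Rabs (snd s - snd s').

Lemma dist1_nonneg s s' : 0 <= dist1 s s'.
Proof.
  unfold dist1. pose proof (Rabs_pos (fst s - fst s')). pose proof (Rabs_pos (snd s - snd s')).
  lra.
Qed.

Lemma dist4_components a b c d a' b' c' d' :
  let D := dist4 (a, b, (c, d)) (a', b', (c', d')) in
  Rabs (a - a') <= D /\ Rabs (b - b') <= D /\ Rabs (c - c') <= D /\ Rabs (d - d') <= D.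
Proof.
  cbv zeta. unfold dist4. repeat split.
  - eapply Rle_trans; [apply Rmax_l|apply Rmax_l].
  - eapply Rle_trans; [apply Rmax_r|apply Rmax_l].
  - eapply Rle_trans; [apply Rmax_l|apply Rmax_r].
  - eapply Rle_trans; [apply Rmax_r|apply Rmax_r].
Qed.

Lemma distn_component n f g v : (v < n)%nat -> Rabs (f v - g v) <= distn n f g.
Proof.
  intros Hv. unfold distn. assert (Hin : In v (seq 0 n)) by (apply in_seq; lia). revert Hin.
  generalize (seq 0 n). induction l as [|x l IH]; simpl; [tauto|]. intros [->|Hin].
  - apply Rmax_l.
  - eapply Rle_trans; [apply IH; auto|apply Rmax_r].
Qed.

Lemma distn_lt n f g eps : 0 < eps -> (forall v, (v < n)%nat -> Rabs (f v - g v) < eps) ->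
  distn n f g < eps.
Proof.
  intros Heps Hfg. unfold distn. assert (Hl : forall v, In v (seq 0 n) -> (v < n)%nat)
    by (intros v Hv; apply in_seq in Hv; lia). revert Hl.
  generalize (seq 0 n). induction l as [|x l IH]; simpl; intros Hl; [auto|].
  apply Rmax_lub_lt; auto.
Qed.

Definition linmap (m11 m12 m21 m22 : R) (s : R * R) : R * R :=
  (m11 * fst s + m12 * snd s, m21 * fst s + m22 * snd s).

Lemma linmap_add m11 m12 m21 m22 s s' :
  linmap m11 m12 m21 m22 (fst s + fst s', snd s + snd s') =
  (fst (linmap m11 m12 m21 m22 s) + fst (linmap m11 m12 m21 m22 s'),
   snd (linmap m11 m12 m21 m22 s) + snd (linmap m11 m12 m21 m22 s')).
Proof. unfold linmap; simpl; f_equal; ring. Qed.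

Lemma linmap_lipschitz m11 m12 m21 m22 s s' :
  dist1 (linmap m11 m12 m21 m22 s) (linmap m11 m12 m21 m22 s') <=
  (Rabs m11 + Rabs m12 + Rabs m21 + Rabs m22) * dist1 s s'.
Proof.
  unfold dist1, linmap; simpl.
  set (x := fst s - fst s'). set (y := snd s - snd s').
  replace (m11 * fst s + m12 * snd s - (m11 * fst s' + m12 * snd s')) with (m11 * x + m12 * y)
    by (unfold x, y; ring).
  replace (m21 * fst s + m22 * snd s - (m21 * fst s' + m22 * snd s')) with (m21 * x + m22 * y)
    by (unfold x, y; ring).
  pose proof (Rabs_triang (m11 * x) (m12 * y)). pose proof (Rabs_triang (m21 * x) (m22 * y)).
  rewrite !Rabs_mult in *.
  pose proof (Rabs_pos m11). pose proof (Rabs_pos m12). pose proof (Rabs_pos m21).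
  pose proof (Rabs_pos m22). pose proof (Rabs_pos x). pose proof (Rabs_pos y). nra.
Qed.

Lemma Rsum_weighted_distn n f f' (D : nat -> R) : (forall v, Rabs (D v) <= 1) ->
  Rabs (Rsum (seq 0 n) (fun v => f v * D v) - Rsum (seq 0 n) (fun v => f' v * D v)) <=
  INR n * distn n f f'.
Proof.
  intros HD. rewrite Rsum_minus. eapply Rle_trans; [apply Rabs_Rsum|].
  rewrite <- (length_seq n 0) at 2. apply Rsum_le_const. intros v Hv. apply in_seq in Hv.
  replace (f v * D v - f' v * D v) with ((f v - f' v) * D v) by ring. rewrite Rabs_mult.
  pose proof (distn_component n f f' v ltac:(lia)). pose proof (HD v).
  pose proof (Rabs_pos (f v - f' v)). pose proof (Rabs_pos (D v)). nra.
Qed.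

Lemma lipschitz_bound_lt C d eps : 0 <= C -> 0 <= d -> d < eps / (C + 1) -> C * d < eps.
Proof.
  intros HC Hd Hlt. apply (Rmult_lt_compat_r (C + 1)) in Hlt; [|lra].
  unfold Rdiv in Hlt. rewrite Rmult_assoc, Rinv_l, Rmult_1_r in Hlt by lra. nra.
Qed.

(** * The triangulated plane *)

Definition padd (a b : Z * Z) : Z * Z := (fst a + fst b, snd a + snd b)%Z.
Definition psub (a b : Z * Z) : Z * Z := (fst a - fst b, snd a - snd b)%Z.

Lemma padd_psub w w' : padd w (psub w' w) = w'.
Proof. destruct w, w'; unfold padd, psub; simpl; f_equal; ring. Qed.

Definition edge (i : nat) : Z * Z :=
  match i with 0%nat => (1, 0)%Z | 1%nat => (0, 1)%Z | _ => (-1, -1)%Z end.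

Definition corner (a b j : nat) : Z * Z :=
  match j with 0%nat => (0, 0)%Z | 1%nat => edge a | _ => padd (edge a) (edge b) end.

Definition vert (w : Z * Z) (a b j : nat) : Z * Z := padd w (corner a b j).

Definition bary (t1 t2 : R) (j : nat) : R :=
  match j with 0%nat => 1 - t1 - t2 | 1%nat => t1 | _ => t2 end.

Definition tri_point (a b : nat) (t1 t2 : R) : R * R :=
  (t1 * IZR (fst (corner a b 1)) + t2 * IZR (fst (corner a b 2)),
   t1 * IZR (snd (corner a b 1)) + t2 * IZR (snd (corner a b 2))).

Definition plane_bary (w : Z * Z) (a b : nat) (t1 t2 : R) : R * R :=
  (IZR (fst w) + fst (tri_point a b t1 t2), IZR (snd w) + snd (tri_point a b t1 t2)).

(* The piecewise linear hat function of the vertex [0] of the triangulated plane. *)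
Definition hat (x y : R) : R := Rmax 0 (1 - Rmax (Rabs x) (Rmax (Rabs y) (Rabs (x - y)))).

Ltac hat_cases := unfold hat, Rmax; repeat destruct Rle_dec; unfold Rabs in *;
  repeat destruct Rcase_abs; lra.

Lemma hat_support x y : hat x y <> 0 -> Rabs x < 1 /\ Rabs y < 1.
Proof.
  intros Hne. assert (Hlt : Rmax (Rabs x) (Rmax (Rabs y) (Rabs (x - y))) < 1).
  { apply Rnot_le_lt; intro Hle. apply Hne. unfold hat. apply Rmax_left. lra. }
  pose proof (Rmax_l (Rabs x) (Rmax (Rabs y) (Rabs (x - y)))).
  pose proof (Rmax_r (Rabs x) (Rmax (Rabs y) (Rabs (x - y)))).
  pose proof (Rmax_l (Rabs y) (Rabs (x - y))). split; lra.
Qed.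

Lemma Rmax_lipschitz a b a' b' : Rabs (Rmax a b - Rmax a' b') <= Rabs (a - a') + Rabs (b - b').
Proof. unfold Rmax; repeat destruct Rle_dec; unfold Rabs; repeat destruct Rcase_abs; lra. Qed.

Lemma hat_lipschitz x y x' y' :
  Rabs (hat x y - hat x' y') <= 2 * (Rabs (x - x') + Rabs (y - y')).
Proof.
  unfold hat.
  eapply Rle_trans; [apply Rmax_lipschitz|]. rewrite Rminus_diag, Rabs_R0, Rplus_0_l.
  replace (1 - _ - _) with (- (Rmax (Rabs x) (Rmax (Rabs y) (Rabs (x - y))) -
    Rmax (Rabs x') (Rmax (Rabs y') (Rabs (x' - y'))))) by ring. rewrite Rabs_Ropp.
  eapply Rle_trans; [apply Rmax_lipschitz|].
  pose proof (Rmax_lipschitz (Rabs y) (Rabs (x - y)) (Rabs y') (Rabs (x' - y'))).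
  pose proof (Rabs_triang_inv2 x x'). pose proof (Rabs_triang_inv2 y y').
  pose proof (Rabs_triang_inv2 (x - y) (x' - y')).
  assert (Rabs (x - y - (x' - y')) <= Rabs (x - x') + Rabs (y - y')).
  { replace (x - y - (x' - y')) with ((x - x') - (y - y')) by ring.
    unfold Rabs; repeat destruct Rcase_abs; lra. }
  pose proof (Rabs_pos (x - x')). pose proof (Rabs_pos (y - y')). lra.
Qed.

Lemma hat_triangle_corner a b t1 t2 j :
  (a < 3)%nat -> (b < 3)%nat -> a <> b -> (j < 3)%nat ->
  0 <= t1 -> 0 <= t2 -> t1 + t2 <= 1 ->
  hat (fst (tri_point a b t1 t2) - IZR (fst (corner a b j)))
      (snd (tri_point a b t1 t2) - IZR (snd (corner a b j))) = bary t1 t2 j.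
Proof.
  intros Ha Hb Hab Hj Ht1 Ht2 Ht.
  destruct a as [|[|[|a]]]; try lia; destruct b as [|[|[|b]]]; try lia;
  destruct j as [|[|[|j]]]; try lia; unfold tri_point, bary; simpl; hat_cases.
Qed.

Lemma hat_far x y : 1 <= Rabs x \/ 1 <= Rabs y -> hat x y = 0.
Proof.
  intros Hxy; unfold hat. apply Rmax_left.
  pose proof (Rmax_l (Rabs x) (Rmax (Rabs y) (Rabs (x - y)))).
  pose proof (Rmax_r (Rabs x) (Rmax (Rabs y) (Rabs (x - y)))).
  pose proof (Rmax_l (Rabs y) (Rabs (x - y))). lra.
Qed.

Lemma tri_point_bounded a b t1 t2 :
  (a < 3)%nat -> (b < 3)%nat -> a <> b -> 0 <= t1 -> 0 <= t2 -> t1 + t2 <= 1 ->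
  Rabs (fst (tri_point a b t1 t2)) <= 1 /\ Rabs (snd (tri_point a b t1 t2)) <= 1.
Proof.
  intros Ha Hb Hab Ht1 Ht2 Ht.
  destruct a as [|[|[|a]]]; try lia; destruct b as [|[|[|b]]]; try lia;
  unfold tri_point; simpl; split; unfold Rabs; destruct Rcase_abs; lra.
Qed.

Lemma Rabs_IZR_ge_2 (k : Z) : (1 < Z.abs k)%Z -> 2 <= Rabs (IZR k).
Proof. intros Hk. rewrite <- abs_IZR. apply IZR_le. lia. Qed.

Lemma hat_triangle_outside a b t1 t2 d :
  (a < 3)%nat -> (b < 3)%nat -> a <> b ->
  0 <= t1 -> 0 <= t2 -> t1 + t2 <= 1 ->
  (forall j, (j < 3)%nat -> d <> corner a b j) ->
  hat (fst (tri_point a b t1 t2) - IZR (fst d)) (snd (tri_point a b t1 t2) - IZR (snd d)) = 0.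
Proof.
  intros Ha Hb Hab Ht1 Ht2 Ht Hd. destruct d as [d1 d2]; cbn [fst snd].
  destruct (Z_le_gt_dec (Z.abs d1) 1) as [B1|B1]; [destruct (Z_le_gt_dec (Z.abs d2) 1) as [B2|B2]|].
  - assert (D1 : (d1 = -1 \/ d1 = 0 \/ d1 = 1)%Z) by lia.
    assert (D2 : (d2 = -1 \/ d2 = 0 \/ d2 = 1)%Z) by lia.
    destruct a as [|[|[|a]]]; try lia; destruct b as [|[|[|b]]]; try lia;
    destruct D1 as [-> | [-> | ->]]; destruct D2 as [-> | [-> | ->]];
    first [ exfalso; apply (Hd 0%nat); [lia|reflexivity]
          | exfalso; apply (Hd 1%nat); [lia|reflexivity]
          | exfalso; apply (Hd 2%nat); [lia|reflexivity]
          | unfold tri_point; simpl; hat_cases ].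
  - destruct (tri_point_bounded a b t1 t2 Ha Hb Hab Ht1 Ht2 Ht) as [_ Hz]. apply hat_far; right.
    pose proof (Rabs_IZR_ge_2 d2 ltac:(lia)).
    pose proof (Rabs_triang_inv (IZR d2) (snd (tri_point a b t1 t2))).
    rewrite Rabs_minus_sym. lra.
  - destruct (tri_point_bounded a b t1 t2 Ha Hb Hab Ht1 Ht2 Ht) as [Hz _]. apply hat_far; left.
    pose proof (Rabs_IZR_ge_2 d1 ltac:(lia)).
    pose proof (Rabs_triang_inv (IZR d1) (fst (tri_point a b t1 t2))).
    rewrite Rabs_minus_sym. lra.
Qed.

Definition hat_at (z : R * R) (w : Z * Z) : R := hat (fst z - IZR (fst w)) (snd z - IZR (snd w)).

Lemma hat_at_plane_bary w a b t1 t2 d :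
  hat_at (plane_bary w a b t1 t2) (padd w d) =
  hat (fst (tri_point a b t1 t2) - IZR (fst d)) (snd (tri_point a b t1 t2) - IZR (snd d)).
Proof. unfold hat_at, plane_bary, padd; simpl. rewrite !plus_IZR. f_equal; ring. Qed.

Lemma hat_at_lipschitz z z' w : Rabs (hat_at z w - hat_at z' w) <= 2 * dist1 z z'.
Proof.
  unfold hat_at, dist1. eapply Rle_trans; [apply hat_lipschitz|].
  right. f_equal. f_equal; f_equal; ring.
Qed.

Section PlaneTriangle.

Variables (w : Z * Z) (a b : nat) (t1 t2 : R).
Hypotheses (Ha : (a < 3)%nat) (Hb : (b < 3)%nat) (Hab : a <> b).
Hypotheses (Ht1 : 0 <= t1) (Ht2 : 0 <= t2) (Ht : t1 + t2 <= 1).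

Lemma hat_at_vert j : (j < 3)%nat -> hat_at (plane_bary w a b t1 t2) (vert w a b j) = bary t1 t2 j.
Proof. intros Hj. unfold vert. rewrite hat_at_plane_bary. apply hat_triangle_corner; auto. Qed.

Lemma hat_at_not_vert w' : (forall j, (j < 3)%nat -> w' <> vert w a b j) ->
  hat_at (plane_bary w a b t1 t2) w' = 0.
Proof.
  intros Hw'. rewrite <- (padd_psub w w'), hat_at_plane_bary.
  apply hat_triangle_outside; auto. intros j Hj E. apply (Hw' j Hj).
  unfold vert. rewrite <- E, padd_psub. reflexivity.
Qed.

End PlaneTriangle.

Definition cell (z : R * R) : list (Z * Z) :=
  let p := Int_part (fst z) in let q := Int_part (snd z) in
  [(p, q); (p + 1, q); (p, q + 1); (p + 1, q + 1)]%Z.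

Lemma Int_part_bounds x : IZR (Int_part x) <= x < IZR (Int_part x) + 1.
Proof. destruct (base_Int_part x). lra. Qed.

Lemma near_Int_part x k : Rabs (x - IZR k) < 1 -> (k = Int_part x \/ k = Int_part x + 1)%Z.
Proof.
  intros Hk. apply Rabs_def2 in Hk. pose proof (Int_part_bounds x).
  assert (IZR k < IZR (Int_part x + 2)) by (rewrite plus_IZR; lra).
  assert (IZR (Int_part x - 1) < IZR k) by (rewrite minus_IZR; lra).
  apply lt_IZR in H0, H1. lia.
Qed.

Lemma hat_at_cell z w : hat_at z w <> 0 -> In w (cell z).
Proof.
  destruct w as [w1 w2]. unfold hat_at; cbn [fst snd]. intros Hne.
  apply hat_support in Hne as [H1 H2]. apply near_Int_part in H1, H2. unfold cell.
  destruct H1 as [-> | ->], H2 as [-> | ->]; simpl; tauto.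
Qed.

Lemma cell_NoDup z : NoDup (cell z).
Proof.
  unfold cell. repeat constructor; simpl; intro Hin;
  repeat destruct Hin as [Hin|Hin]; try (injection Hin; lia); contradiction.
Qed.

Lemma Int_part_shift x k : Int_part (x + IZR k) = (Int_part x + k)%Z.
Proof. symmetry. apply Int_part_spec. rewrite plus_IZR. pose proof (Int_part_bounds x). lra. Qed.

Lemma cell_shift z k :
  cell (fst z + IZR (fst k), snd z + IZR (snd k)) = map (fun w => padd w k) (cell z).
Proof.
  unfold cell; cbn [fst snd]. rewrite !Int_part_shift. unfold padd; cbn [map fst snd].
  rewrite !(Z.add_shuffle0 _ 1). reflexivity.
Qed.

Lemma plane_bary_cover z : exists w a b t1 t2,
  (a < 3)%nat /\ (b < 3)%nat /\ a <> b /\ 0 <= t1 /\ 0 <= t2 /\ t1 + t2 <= 1 /\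
  z = plane_bary w a b t1 t2.
Proof.
  destruct z as [x y]. pose proof (Int_part_bounds x). pose proof (Int_part_bounds y).
  set (p := Int_part x) in *. set (q := Int_part y) in *.
  destruct (Rle_dec (y - IZR q) (x - IZR p)).
  - exists (p, q), 0%nat, 1%nat, ((x - IZR p) - (y - IZR q)), (y - IZR q).
    repeat split; try lia; try lra. unfold plane_bary, tri_point; simpl. f_equal; ring.
  - exists (p, q), 1%nat, 0%nat, ((y - IZR q) - (x - IZR p)), (x - IZR p).
    repeat split; try lia; try lra. unfold plane_bary, tri_point; simpl. f_equal; ring.
Qed.

(** * The torus *)

Lemma cos_period_Z x m : cos (x + 2 * PI * IZR m) = cos x.
Proof.
  destruct (Z_le_gt_dec 0 m) as [Hm|Hm].
  - rewrite <- (Z2Nat.id m Hm), <- INR_IZR_INZ, <- (cos_period x (Z.to_nat m)). f_equal; ring.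
  - rewrite <- (cos_period (x + 2 * PI * IZR m) (Z.to_nat (- m))).
    rewrite INR_IZR_INZ, Z2Nat.id, opp_IZR by lia. f_equal; ring.
Qed.

Lemma sin_period_Z x m : sin (x + 2 * PI * IZR m) = sin x.
Proof.
  destruct (Z_le_gt_dec 0 m) as [Hm|Hm].
  - rewrite <- (Z2Nat.id m Hm), <- INR_IZR_INZ, <- (sin_period x (Z.to_nat m)). f_equal; ring.
  - rewrite <- (sin_period (x + 2 * PI * IZR m) (Z.to_nat (- m))).
    rewrite INR_IZR_INZ, Z2Nat.id, opp_IZR by lia. f_equal; ring.
Qed.

Lemma Rabs_sin_le x : Rabs (sin x) <= Rabs x.
Proof.
  assert (Hpos : forall y, 0 < y -> Rabs (sin y) <= y).
  { intros y Hy. pose proof (sin_lt_x y Hy). pose proof (SIN_bound y). pose proof PI2_1.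
    destruct (Rle_dec y PI).
    - rewrite Rabs_right by (apply Rle_ge, sin_ge_0; lra). lra.
    - unfold Rabs; destruct Rcase_abs; lra. }
  destruct (Rtotal_order x 0) as [Hx|[->|Hx]].
  - replace x with (- (- x)) by ring. rewrite sin_neg, !Rabs_Ropp, (Rabs_left x) by lra.
    apply Hpos; lra.
  - rewrite sin_0; lra.
  - rewrite (Rabs_right x) by lra. apply Hpos; lra.
Qed.

Lemma Rabs_half x : Rabs (x / 2) = Rabs x / 2.
Proof. unfold Rabs; repeat destruct Rcase_abs; lra. Qed.

Lemma cos_lipschitz x y : Rabs (cos x - cos y) <= Rabs (x - y).
Proof.
  rewrite form2, !Rabs_mult, (Rabs_left (-2)) by lra.
  pose proof (Rabs_sin_le ((x - y) / 2)) as Hs. rewrite Rabs_half in Hs.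
  assert (Rabs (sin ((x + y) / 2)) <= 1)
    by (apply Rabs_le; pose proof (SIN_bound ((x + y) / 2)); lra).
  pose proof (Rabs_pos (sin ((x - y) / 2))). pose proof (Rabs_pos (sin ((x + y) / 2))). nra.
Qed.

Lemma sin_lipschitz x y : Rabs (sin x - sin y) <= Rabs (x - y).
Proof.
  rewrite form4, !Rabs_mult, (Rabs_right 2) by lra.
  pose proof (Rabs_sin_le ((x - y) / 2)) as Hs. rewrite Rabs_half in Hs.
  assert (Rabs (cos ((x + y) / 2)) <= 1)
    by (apply Rabs_le; pose proof (COS_bound ((x + y) / 2)); lra).
  pose proof (Rabs_pos (sin ((x - y) / 2))). pose proof (Rabs_pos (cos ((x + y) / 2))). nra.
Qed.

(* The universal covering [R^2 -> T^2], in turns rather than radians. *)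
Definition wrap (s : R * R) : R4 :=
  (cos (2 * PI * fst s), sin (2 * PI * fst s), (cos (2 * PI * snd s), sin (2 * PI * snd s))).

Lemma wrap_torus2 s : torus2 (wrap s).
Proof. unfold wrap, torus2. split; rewrite <- !Rsqr_def, Rplus_comm; apply sin2_cos2. Qed.

Lemma wrap_shift s m1 m2 : wrap (fst s + IZR m1, snd s + IZR m2) = wrap s.
Proof.
  unfold wrap; simpl. rewrite !Rmult_plus_distr_l, !cos_period_Z, !sin_period_Z. reflexivity.
Qed.

Lemma dist4_wrap s s' :
  dist4 (wrap s) (wrap s') <= 2 * PI * dist1 s s'.
Proof.
  assert (Htrig : forall x y, Rabs (cos (2 * PI * x) - cos (2 * PI * y)) <= 2 * PI * Rabs (x - y) /\
                              Rabs (sin (2 * PI * x) - sin (2 * PI * y)) <= 2 * PI * Rabs (x - y)).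
  { intros x y. pose proof PI_RGT_0.
    replace (2 * PI * Rabs (x - y)) with (Rabs (2 * PI * x - 2 * PI * y))
      by (rewrite <- Rmult_minus_distr_l, Rabs_mult, (Rabs_right (2 * PI)); lra).
    split; [apply cos_lipschitz|apply sin_lipschitz]. }
  destruct (Htrig (fst s) (fst s')), (Htrig (snd s) (snd s')).
  pose proof PI_RGT_0.
  pose proof (Rabs_pos (fst s - fst s')). pose proof (Rabs_pos (snd s - snd s')).
  unfold wrap, dist4, dist1. repeat apply Rmax_lub; nra.
Qed.

(* The angle of a point of the unit circle, in turns, with values in [0, 1). *)
Definition angle (a b : R) : R :=
  if Rle_dec 0 b then acos a / (2 * PI) else 1 - acos a / (2 * PI).

Definition angles (q : R4) : R * R := let '(a, b, (c, d)) := q in (angle a b, angle c d).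

Lemma cos_2PI_minus y : cos (2 * PI - y) = cos y.
Proof. rewrite cos_minus, cos_2PI, sin_2PI. ring. Qed.

Lemma sin_2PI_minus y : sin (2 * PI - y) = - sin y.
Proof. rewrite sin_minus, cos_2PI, sin_2PI. ring. Qed.

Lemma cos_sin_angle a b : a * a + b * b = 1 ->
  cos (2 * PI * angle a b) = a /\ sin (2 * PI * angle a b) = b.
Proof.
  intros Hab. assert (Ha : -1 <= a <= 1) by nra. pose proof PI_RGT_0.
  assert (Hs : sqrt (1 - a²) = Rabs b).
  { replace (1 - a²) with (b²) by (unfold Rsqr; lra). apply sqrt_Rsqr_abs. }
  unfold angle. destruct (Rle_dec 0 b).
  - replace (2 * PI * (acos a / (2 * PI))) with (acos a) by (field; lra).
    rewrite cos_acos, sin_acos, Hs, Rabs_right by lra. auto.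
  - replace (2 * PI * (1 - acos a / (2 * PI))) with (2 * PI - acos a) by (field; lra).
    rewrite cos_2PI_minus, sin_2PI_minus, cos_acos, sin_acos, Hs, Rabs_left by lra.
    split; [auto|ring].
Qed.

Lemma wrap_angles q : torus2 q -> wrap (angles q) = q.
Proof.
  destruct q as [[a b] [c d]]. intros [Hab Hcd]. unfold wrap, angles; simpl.
  destruct (cos_sin_angle a b Hab) as [-> ->], (cos_sin_angle c d Hcd) as [-> ->]. reflexivity.
Qed.

Lemma angle_cos_sin t : exists k, angle (cos (2 * PI * t)) (sin (2 * PI * t)) = t - IZR k.
Proof.
  exists (Int_part t). pose proof PI_RGT_0. pose proof (Int_part_bounds t).
  set (t' := t - IZR (Int_part t)). assert (Ht' : 0 <= t' < 1) by (unfold t'; lra).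
  replace (2 * PI * t) with (2 * PI * t' + 2 * PI * IZR (Int_part t)) by (unfold t'; ring).
  rewrite cos_period_Z, sin_period_Z. unfold angle.
  destruct (Rle_dec t' (1/2)).
  - destruct (Rle_dec 0 (sin (2 * PI * t'))) as [|Hs]; [|exfalso; apply Hs, sin_ge_0; nra].
    rewrite acos_cos by nra. field. lra.
  - destruct (Rle_dec 0 (sin (2 * PI * t'))) as [Hs|];
      [exfalso; revert Hs; apply Rlt_not_le, sin_lt_0; nra|].
    rewrite <- cos_2PI_minus, acos_cos by nra. field. lra.
Qed.

Lemma angles_wrap s : exists k1 k2, angles (wrap s) = (fst s - IZR k1, snd s - IZR k2).
Proof.
  destruct (angle_cos_sin (fst s)) as [k1 E1], (angle_cos_sin (snd s)) as [k2 E2].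
  exists k1, k2. unfold wrap, angles. rewrite E1, E2. reflexivity.
Qed.

Lemma near_integer_of_cos e x : 0 < e <= 1/2 -> cos (2 * PI * e) < cos (2 * PI * x) ->
  exists k, Rabs (x - IZR k) < e.
Proof.
  intros He Hc. pose proof PI_RGT_0. exists (Int_part (x + 1/2)).
  pose proof (Int_part_bounds (x + 1/2)). set (y := x - IZR (Int_part (x + 1/2))) in *.
  assert (Hy : Rabs y <= 1/2) by (apply Rabs_le; unfold y; lra).
  assert (Hcy : cos (2 * PI * x) = cos (2 * PI * Rabs y)).
  { replace (2 * PI * x) with (2 * PI * y + 2 * PI * IZR (Int_part (x + 1/2))) by (unfold y; ring).
    rewrite cos_period_Z. unfold Rabs; destruct Rcase_abs; [rewrite <- cos_neg|]; f_equal; ring. }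
  apply Rnot_le_lt; intro Hle. destruct (Rle_lt_or_eq_dec _ _ Hle) as [Hlt|Heq].
  - apply (Rlt_asym _ _ Hc). rewrite Hcy. apply cos_decreasing_1; pose proof (Rabs_pos y); nra.
  - rewrite Hcy, Heq in Hc. lra.
Qed.

(* [angle] is discontinuous on the positive real axis, but continuous modulo [Z]. *)
Lemma angle_continuous_mod_Z a b eps : a * a + b * b = 1 -> 0 < eps ->
  exists delta, 0 < delta /\ forall a' b', a' * a' + b' * b' = 1 ->
    Rabs (a' - a) < delta -> Rabs (b' - b) < delta ->
    exists k, Rabs (angle a' b' - angle a b - IZR k) < eps.
Proof.
  intros Hab Heps. pose proof PI_RGT_0.
  set (e := Rmin eps (1/2)).
  assert (He : 0 < e <= 1/2) by (unfold e; apply Rmin_case_strong; lra).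
  set (c := cos (2 * PI * e)).
  assert (Hc : -1 <= c < 1).
  { split; [apply COS_bound|]. unfold c; rewrite <- cos_0. apply cos_decreasing_1; nra. }
  exists ((1 - c) / 2). split; [lra|].
  intros a' b' Hab' Ha Hb.
  destruct (near_integer_of_cos e (angle a' b' - angle a b)) as [k Hk]; auto.
  - replace (2 * PI * (angle a' b' - angle a b)) with (2 * PI * angle a' b' - 2 * PI * angle a b)
      by ring.
    rewrite cos_minus. destruct (cos_sin_angle a b Hab) as [-> ->].
    destruct (cos_sin_angle a' b' Hab') as [-> ->]. fold c.
    apply Rabs_def2 in Ha, Hb. nra.
  - exists k. eapply Rlt_le_trans; [exact Hk|]. apply Rmin_l.
Qed.

(** * The Tonnetz as a quotient of the plane *)

Section Tonnetz.

Variables l1 l2 l3 : nat.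
Hypotheses (l1_pos : (0 < l1)%nat) (l2_pos : (0 < l2)%nat) (l3_pos : (0 < l3)%nat).
Hypothesis L_generic : generic 3 (L3 l1 l2 l3).

Local Notation n := (l1 + l2 + l3)%nat.
Local Notation L := (L3 l1 l2 l3).
Local Notation Zn := (Z.of_nat n).

Definition phi (w : Z * Z) : Z := (fst w * Z.of_nat l1 + snd w * Z.of_nat l2)%Z.

Definition vertex (w : Z * Z) : nat := Z.to_nat (phi w mod Zn).

Definition is_period (k : Z * Z) : Prop := (phi k mod Zn = 0)%Z.

Lemma Z_of_vertex w : Z.of_nat (vertex w) = (phi w mod Zn)%Z.
Proof. unfold vertex. rewrite Z2Nat.id; [auto|]. apply Z.mod_pos_bound. lia. Qed.

Lemma vertex_lt w : (vertex w < n)%nat.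
Proof. pose proof (Z_of_vertex w). pose proof (Z.mod_pos_bound (phi w) Zn). lia. Qed.

Lemma phi_padd w w' : phi (padd w w') = (phi w + phi w')%Z.
Proof. unfold phi, padd; simpl; ring. Qed.

Lemma phi_psub w w' : phi (psub w w') = (phi w - phi w')%Z.
Proof. unfold phi, psub; simpl; ring. Qed.

Lemma vertex_padd_period w k : is_period k -> vertex (padd w k) = vertex w.
Proof.
  unfold is_period, vertex; intros Hk. rewrite phi_padd, Zplus_mod, Hk, Z.add_0_r, Z.mod_mod; lia.
Qed.

Lemma vertex_eq_period w w' : vertex w = vertex w' -> is_period (psub w' w).
Proof.
  intros E. apply (f_equal Z.of_nat) in E. rewrite !Z_of_vertex in E.
  unfold is_period. rewrite phi_psub, Zminus_mod, E, Z.sub_diag. reflexivity.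
Qed.

(* The star of a lattice point: [0], [± edge 0], [± edge 1], [± edge 2]. *)
Definition star : list (Z * Z) := [(0, 0); (1, 0); (0, 1); (-1, -1); (-1, 0); (0, -1); (1, 1)]%Z.

Definition subset3 (b0 b1 b2 : bool) (i : nat) : bool :=
  match i with 0%nat => b0 | 1%nat => b1 | _ => b2 end.

Definition edge_sum (I : nat -> bool) : Z * Z :=
  padd (padd (if I 0%nat then edge 0 else (0, 0)%Z) (if I 1%nat then edge 1 else (0, 0)%Z))
       (if I 2%nat then edge 2 else (0, 0)%Z).

Lemma star_edge_sum d : In d star ->
  exists I, (I 0%nat && I 1%nat && I 2%nat)%bool = false /\ d = edge_sum I.
Proof.
  simpl; intros Hd; repeat destruct Hd as [<-|Hd]; try contradiction;
  [ exists (subset3 false false false) | exists (subset3 true false false)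
  | exists (subset3 false true false) | exists (subset3 false false true)
  | exists (subset3 false true true) | exists (subset3 true false true)
  | exists (subset3 true true false) ]; split; reflexivity.
Qed.

Lemma phi_edge_sum I : (I 0%nat && I 1%nat && I 2%nat)%bool = false ->
  (phi (edge_sum I) mod Zn)%Z = Z.of_nat (subset_sum 3 L I).
Proof.
  unfold edge_sum, subset_sum, phi, padd, edge; cbn [fst snd seq map list_sum fold_right L3].
  destruct (I 0%nat), (I 1%nat), (I 2%nat); intros HI; try discriminate HI; cbn [fst snd];
  symmetry; first [ apply (Z.mod_unique _ _ 0%Z); lia | apply (Z.mod_unique _ _ (-1)%Z); lia ].
Qed.

(* Genericity of [L] says exactly that the star of a lattice point lies over distinct vertices. *)
Lemma star_phi_inj d d' : In d star -> In d' star -> (phi d mod Zn = phi d' mod Zn)%Z -> d = d'.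
Proof.
  intros Hd Hd' E.
  destruct (star_edge_sum d Hd) as [I [HI ->]], (star_edge_sum d' Hd') as [J [HJ ->]].
  rewrite !phi_edge_sum in E by auto. apply Nat2Z.inj in E.
  pose proof (L_generic I J E) as HIJ.
  unfold edge_sum. rewrite (HIJ 0%nat), (HIJ 1%nat), (HIJ 2%nat) by lia. reflexivity.
Qed.

Definition star_decode (r : Z) : Z * Z :=
  match find (fun d => Z.eqb (phi d mod Zn) r) star with Some d => d | None => (0, 0)%Z end.

Lemma star_decode_phi d : In d star -> star_decode (phi d mod Zn) = d.
Proof.
  intros Hd. unfold star_decode. destruct (find _ star) as [d'|] eqn:Hf.
  - apply find_some in Hf as [Hd' E]. apply Z.eqb_eq in E. apply star_phi_inj; auto.
  - apply (find_none _ _ Hf) in Hd. rewrite Z.eqb_refl in Hd. discriminate.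
Qed.

Lemma star_decode_small r :
  (Z.abs (fst (star_decode r)) <= 1 /\ Z.abs (snd (star_decode r)) <= 1)%Z.
Proof.
  unfold star_decode. destruct (find _ star) as [d|] eqn:Hf; [|simpl; lia].
  apply find_some in Hf as [Hd _]. simpl in Hd.
  repeat destruct Hd as [<-|Hd]; try contradiction; simpl; lia.
Qed.

(* The lattice vector from vertex [u] to a neighbouring vertex [v] ([(0, 0)] if [v] is not a
   neighbour of [u]). *)
Definition displacement (u v : nat) : Z * Z := star_decode ((Z.of_nat v - Z.of_nat u) mod Zn).

Lemma displacement_vertex w w' : In (psub w' w) star ->
  displacement (vertex w) (vertex w') = psub w' w.
Proof.
  intros Hd. unfold displacement. rewrite !Z_of_vertex, <- Zminus_mod, <- phi_psub.
  apply star_decode_phi; auto.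
Qed.

Lemma vertex_inj_star w w' : In (psub w' w) star -> vertex w = vertex w' -> w = w'.
Proof.
  intros Hd E. apply vertex_eq_period in E.
  assert (H0 : psub w' w = (0, 0)%Z) by (apply star_phi_inj; [auto|left; reflexivity|exact E]).
  destruct w, w'; unfold psub in H0; cbn [fst snd] in H0. injection H0; intros. f_equal; lia.
Qed.

(* The triangle [vert w a b] is the simplex [Delta(vertex w; tri_perm a b)]. *)
Definition tri_perm (a b : nat) (i : nat) : nat :=
  match i with 0%nat => a | 1%nat => b | _ => (3 - a - b)%nat end.

Section Triangle.

Variables (w : Z * Z) (a b : nat).
Hypotheses (Ha : (a < 3)%nat) (Hb : (b < 3)%nat) (Hab : a <> b).

Lemma tri_perm_is_perm : is_perm 3 (tri_perm a b).
Proof.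
  split.
  - intros [|[|[|i]]] Hi; unfold tri_perm; lia.
  - intros [|[|[|i]]] [|[|[|j]]] Hi Hj; unfold tri_perm; lia.
Qed.

Lemma corner_diff_star i j : (i < 3)%nat -> (j < 3)%nat ->
  In (psub (corner a b j) (corner a b i)) star.
Proof.
  intros Hi Hj.
  destruct a as [|[|[|]]]; try lia; destruct b as [|[|[|]]]; try lia;
  destruct i as [|[|[|]]]; try lia; destruct j as [|[|[|]]]; try lia; simpl; tauto.
Qed.

Lemma psub_vert i j : psub (vert w a b j) (vert w a b i) = psub (corner a b j) (corner a b i).
Proof. unfold vert, psub, padd; simpl. f_equal; ring. Qed.

Lemma vert_diff_star i j : (i < 3)%nat -> (j < 3)%nat ->
  In (psub (vert w a b j) (vert w a b i)) star.
Proof. intros Hi Hj. rewrite psub_vert. apply corner_diff_star; auto. Qed.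

Lemma displacement_vert i j : (i < 3)%nat -> (j < 3)%nat ->
  displacement (vertex (vert w a b i)) (vertex (vert w a b j)) = psub (corner a b j) (corner a b i).
Proof. intros Hi Hj. rewrite displacement_vertex, psub_vert; auto using vert_diff_star. Qed.

Lemma vertex_vert_inj i j : (i < 3)%nat -> (j < 3)%nat ->
  vertex (vert w a b i) = vertex (vert w a b j) -> i = j.
Proof.
  intros Hi Hj E. apply vertex_inj_star in E; [|apply vert_diff_star; auto].
  destruct w as [w1 w2]. unfold vert, padd in E; simpl in E.
  destruct a as [|[|[|]]]; try lia; destruct b as [|[|[|]]]; try lia;
  destruct i as [|[|[|]]]; try lia; destruct j as [|[|[|]]]; try lia;
  injection E; lia.
Qed.

Lemma vertex_vert j : (j < 3)%nat ->
  vertex (vert w a b j) = ((vertex w + psum L (tri_perm a b) j) mod n)%nat.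
Proof.
  intros Hj. apply Nat2Z.inj.
  rewrite Z_of_vertex, Nat2Z.inj_mod, (Nat2Z.inj_add (vertex w)), Z_of_vertex,
    Z.add_mod_idemp_l by lia.
  destruct w as [w1 w2].
  destruct a as [|[|[|]]]; try lia; destruct b as [|[|[|]]]; try lia;
  destruct j as [|[|[|]]]; try lia;
  unfold vert, padd, phi, psum; simpl;
  first [ f_equal; lia
        | rewrite <- (Z_mod_plus_full _ (-1) Zn); f_equal; lia
        | rewrite <- (Z_mod_plus_full _ 1 Zn); f_equal; lia ].
Qed.

Lemma vertex_vert_eqb i j : (i < 3)%nat -> (j < 3)%nat ->
  Nat.eqb (vertex (vert w a b i)) (vertex (vert w a b j)) = Nat.eqb i j.
Proof.
  intros Hi Hj. destruct (Nat.eqb_spec i j) as [->|Hij]; [apply Nat.eqb_refl|].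
  apply Nat.eqb_neq. intro E. apply Hij, vertex_vert_inj; auto.
Qed.

Lemma vertex_vert_NoDup : NoDup (map (fun j => vertex (vert w a b j)) [0; 1; 2]%nat).
Proof.
  simpl. repeat constructor; simpl; intros Hin;
  repeat destruct Hin as [Hin|Hin]; try contradiction; apply vertex_vert_inj in Hin; lia.
Qed.

Definition bary_point (t1 t2 : R) (v : nat) : R :=
  Rsum [0; 1; 2]%nat (fun j => if Nat.eqb (vertex (vert w a b j)) v then bary t1 t2 j else 0).

Lemma bary_point_vert t1 t2 j : (j < 3)%nat ->
  bary_point t1 t2 (vertex (vert w a b j)) = bary t1 t2 j.
Proof.
  intros Hj. unfold bary_point. rewrite !Rsum_cons, Rsum_nil, !vertex_vert_eqb by lia.
  destruct j as [|[|[|]]]; try lia; simpl; ring.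
Qed.

Definition on_triangle (f : nat -> R) : Prop :=
  forall v, f v <> 0 -> exists j, (j < 3)%nat /\ v = vertex (vert w a b j).

Lemma bary_point_on_triangle t1 t2 : on_triangle (bary_point t1 t2).
Proof.
  intros v Hv. unfold bary_point in Hv. rewrite !Rsum_cons, Rsum_nil in Hv.
  destruct (Nat.eqb_spec (vertex (vert w a b 0)) v); [exists 0%nat; split; auto; lia|].
  destruct (Nat.eqb_spec (vertex (vert w a b 1)) v); [exists 1%nat; split; auto; lia|].
  destruct (Nat.eqb_spec (vertex (vert w a b 2)) v); [exists 2%nat; split; auto; lia|].
  exfalso. apply Hv. ring.
Qed.

Lemma Rsum_on_triangle f F : on_triangle f ->
  Rsum (seq 0 n) (fun v => f v * F v) =
  Rsum [0; 1; 2]%nat (fun j => f (vertex (vert w a b j)) * F (vertex (vert w a b j))).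
Proof.
  intros Hf. rewrite <- (Rsum_map (fun j => vertex (vert w a b j)) _ (fun v => f v * F v)).
  apply (Rsum_incl Nat.eq_dec).
  - apply seq_NoDup.
  - apply vertex_vert_NoDup.
  - intros v Hv. apply in_seq. simpl in Hv. pose proof (vertex_lt (vert w a b 0)).
    pose proof (vertex_lt (vert w a b 1)). pose proof (vertex_lt (vert w a b 2)).
    repeat destruct Hv as [<-|Hv]; try contradiction; lia.
  - intros v _ Hv. destruct (Req_dec_T (f v) 0) as [->|Hne]; [ring|].
    destruct (Hf v Hne) as [j [Hj ->]]. exfalso.
    apply Hv, (in_map (fun j => vertex (vert w a b j))).
    destruct j as [|[|[|]]]; simpl; tauto || lia.
Qed.

Lemma bary_point_sum t1 t2 : Rsum (seq 0 n) (bary_point t1 t2) = 1.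
Proof.
  rewrite (Rsum_ext_in _ _ (fun v => bary_point t1 t2 v * 1)) by (intros; ring).
  rewrite Rsum_on_triangle by apply bary_point_on_triangle.
  rewrite !Rsum_cons, Rsum_nil, !bary_point_vert by lia. simpl; ring.
Qed.

Lemma bary_point_realization t1 t2 : 0 <= t1 -> 0 <= t2 -> t1 + t2 <= 1 ->
  tonnetz_realization n 3 L (bary_point t1 t2).
Proof.
  intros Ht1 Ht2 Ht. split; [|split; [|split]].
  - intros v. unfold bary_point. rewrite !Rsum_cons, Rsum_nil.
    repeat destruct (Nat.eqb _ _); simpl; lra.
  - intros v Hv. destruct (Req_dec_T (bary_point t1 t2 v) 0) as [|Hne]; auto.
    destruct (bary_point_on_triangle t1 t2 v Hne) as [j [_ ->]].
    pose proof (vertex_lt (vert w a b j)). lia.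
  - apply bary_point_sum.
  - exists (vertex w), (tri_perm a b). split; [apply vertex_lt|split; [apply tri_perm_is_perm|]].
    intros v Hv. destruct (bary_point_on_triangle t1 t2 v Hv) as [j [Hj ->]].
    exists j. split; auto. apply vertex_vert; auto.
Qed.

Lemma realization_on_triangle f : tonnetz_realization n 3 L f -> on_triangle f ->
  exists t1 t2, 0 <= t1 /\ 0 <= t2 /\ t1 + t2 <= 1 /\ f = bary_point t1 t2.
Proof.
  intros [Hnn [_ [Hsum _]]] Hf.
  assert (Hsum3 := Rsum_on_triangle f (fun _ => 1) Hf).
  rewrite (Rsum_ext_in _ _ f) in Hsum3 by (intros; ring).
  change (Rsum (seq 0 n) f = 1) in Hsum. rewrite Hsum, !Rsum_cons, Rsum_nil in Hsum3.
  exists (f (vertex (vert w a b 1))), (f (vertex (vert w a b 2))).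
  pose proof (Hnn (vertex (vert w a b 0))). pose proof (Hnn (vertex (vert w a b 1))).
  pose proof (Hnn (vertex (vert w a b 2))). repeat split; try lra.
  extensionality v. destruct (Req_dec_T (f v) 0) as [Hv|Hv].
  - rewrite Hv. symmetry.
    destruct (Req_dec_T (bary_point (f (vertex (vert w a b 1))) (f (vertex (vert w a b 2))) v) 0)
      as [|Hne]; auto.
    destruct (bary_point_on_triangle _ _ v Hne) as [j [Hj ->]].
    rewrite bary_point_vert by auto. destruct j as [|[|[|]]]; try lia; cbn [bary]; lra.
  - destruct (Hf v Hv) as [j [Hj ->]]. rewrite bary_point_vert by auto.
    destruct j as [|[|[|]]]; try lia; cbn [bary]; lra.
Qed.

End Triangle.

Definition Zpair_eq_dec (x y : Z * Z) : {x = y} + {x <> y}.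
Proof. decide equality; apply Z.eq_dec. Defined.

Definition plane_to_complex (z : R * R) (v : nat) : R :=
  Rsum (cell z) (fun w => if Nat.eqb (vertex w) v then hat_at z w else 0).

Lemma plane_to_complex_sum z v l : NoDup l -> incl (cell z) l ->
  plane_to_complex z v = Rsum l (fun w => if Nat.eqb (vertex w) v then hat_at z w else 0).
Proof.
  intros Hl Hincl. symmetry. apply (Rsum_incl Zpair_eq_dec); auto using cell_NoDup.
  intros w _ Hw. destruct (Nat.eqb _ _); auto.
  destruct (Req_dec_T (hat_at z w) 0); auto. exfalso; apply Hw, hat_at_cell; auto.
Qed.

Lemma plane_to_complex_period z k : is_period k ->
  plane_to_complex (fst z + IZR (fst k), snd z + IZR (snd k)) = plane_to_complex z.
Proof.
  intros Hk. extensionality v. unfold plane_to_complex. rewrite cell_shift, Rsum_map.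
  apply Rsum_ext_in. intros w _. rewrite vertex_padd_period by auto.
  destruct (Nat.eqb _ _); auto. unfold hat_at, padd; simpl. rewrite !plus_IZR. f_equal; ring.
Qed.

Lemma plane_to_complex_bary w a b t1 t2 : (a < 3)%nat -> (b < 3)%nat -> a <> b ->
  0 <= t1 -> 0 <= t2 -> t1 + t2 <= 1 ->
  plane_to_complex (plane_bary w a b t1 t2) = bary_point w a b t1 t2.
Proof.
  intros Ha Hb Hab Ht1 Ht2 Ht. extensionality v.
  set (T := map (vert w a b) [0; 1; 2]%nat).
  assert (HT : NoDup T).
  { apply (NoDup_map_inv vertex). unfold T. rewrite map_map. apply vertex_vert_NoDup; auto. }
  rewrite (plane_to_complex_sum _ v (nodup Zpair_eq_dec (cell (plane_bary w a b t1 t2) ++ T)))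
    by (apply NoDup_nodup || (intros x Hx; apply nodup_In, in_app_iff; auto)).
  rewrite (Rsum_incl Zpair_eq_dec _ T).
  - unfold T, bary_point. rewrite Rsum_map. apply Rsum_ext_in. intros j Hj.
    rewrite hat_at_vert by (simpl in Hj; lia || tauto). reflexivity.
  - apply NoDup_nodup.
  - exact HT.
  - intros x Hx. apply nodup_In, in_app_iff; auto.
  - intros w' _ Hw'. destruct (Nat.eqb _ _); auto. apply hat_at_not_vert; auto.
    intros j Hj E. apply Hw'. subst w'. apply (in_map (vert w a b)). simpl; lia.
Qed.

Lemma plane_to_complex_realization z : tonnetz_realization n 3 L (plane_to_complex z).
Proof.
  destruct (plane_bary_cover z) as [w [a [b [t1 [t2 [Ha [Hb [Hab [Ht1 [Ht2 [Ht ->]]]]]]]]]]].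
  rewrite plane_to_complex_bary by auto. apply bary_point_realization; auto.
Qed.

Lemma plane_to_complex_lipschitz z z' v :
  Rabs (plane_to_complex z v - plane_to_complex z' v) <= 16 * dist1 z z'.
Proof.
  set (B := nodup Zpair_eq_dec (cell z ++ cell z')).
  assert (HB : NoDup B) by apply NoDup_nodup.
  assert (Hincl : incl (cell z ++ cell z') B) by (intros x Hx; apply nodup_In; auto).
  rewrite (plane_to_complex_sum z v B), (plane_to_complex_sum z' v B), Rsum_minus
    by (auto; intros x Hx; apply Hincl, in_app_iff; auto).
  eapply Rle_trans; [apply Rabs_Rsum|].
  eapply Rle_trans; [apply (Rsum_le_const _ _ (2 * dist1 z z'))|].
  - intros w _. destruct (Nat.eqb _ _).
    + apply hat_at_lipschitz.
    + rewrite Rminus_0_r, Rabs_R0. pose proof (dist1_nonneg z z'). lra.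
  - assert (HL : (length B <= 8)%nat).
    { change 8%nat with (length (cell z ++ cell z')). apply NoDup_incl_length; auto.
      intros x Hx. apply nodup_In in Hx. exact Hx. }
    apply le_INR in HL. replace (INR 8) with 8 in HL by (simpl; ring).
    pose proof (dist1_nonneg z z'). pose proof (pos_INR (length B)). nra.
Qed.

Section Coordinates.

Hypothesis L_reduced : reduced 3 L.

Local Notation g := (Z.gcd (Z.of_nat l1) Zn).

Lemma reduced_divisor (d : Z) : (0 <= d)%Z ->
  (d | Z.of_nat l1)%Z -> (d | Z.of_nat l2)%Z -> (d | Zn)%Z -> d = 1%Z.
Proof.
  intros Hd H1 H2 HN.
  assert (H3 : (d | Z.of_nat l3)%Z).
  { replace (Z.of_nat l3) with (Zn - Z.of_nat l1 - Z.of_nat l2)%Z by lia.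
    apply Z.divide_sub_r; [apply Z.divide_sub_r|]; auto. }
  assert (Hnat : forall m, (d | Z.of_nat m)%Z -> Nat.divide (Z.to_nat d) m).
  { intros m [k Hk]. destruct (Z.eq_dec d 0) as [->|Hne]; [exists 0%nat; lia|].
    exists (Z.to_nat k). assert (0 <= k)%Z by nia. lia. }
  assert (Hd1 : Nat.divide (Z.to_nat d) 1).
  { rewrite <- L_reduced. cbn. rewrite Nat.gcd_0_r.
    apply Nat.gcd_greatest; [|apply Nat.gcd_greatest]; auto. }
  apply Nat.divide_1_r in Hd1. lia.
Qed.

Lemma gcd_pos : (0 < g)%Z.
Proof. pose proof (Z.gcd_nonneg (Z.of_nat l1) Zn). pose proof (Z.gcd_eq_0_r (Z.of_nat l1) Zn). lia.
Qed.

Lemma gcd_l2_coprime : Z.gcd g (Z.of_nat l2) = 1%Z.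
Proof.
  apply reduced_divisor.
  - apply Z.gcd_nonneg.
  - eapply Z.divide_trans; [apply Z.gcd_divide_l|apply Z.gcd_divide_l].
  - apply Z.gcd_divide_r.
  - eapply Z.divide_trans; [apply Z.gcd_divide_l|apply Z.gcd_divide_r].
Qed.

Lemma vertex_one_exists : exists c, (phi c mod Zn = 1)%Z.
Proof.
  destruct (Z.gcd_bezout (Z.of_nat l2) Zn _ eq_refl) as [a0 [b0 Hab]].
  assert (Hcop : Z.gcd (Z.of_nat l1) (Z.gcd (Z.of_nat l2) Zn) = 1%Z).
  { apply reduced_divisor.
    - apply Z.gcd_nonneg.
    - apply Z.gcd_divide_l.
    - eapply Z.divide_trans; [apply Z.gcd_divide_r|apply Z.gcd_divide_l].
    - eapply Z.divide_trans; [apply Z.gcd_divide_r|apply Z.gcd_divide_r]. }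
  destruct (Z.gcd_bezout _ _ _ Hcop) as [x [y Hxy]].
  exists (x, y * a0)%Z. unfold phi; cbn [fst snd].
  replace (x * Z.of_nat l1 + y * a0 * Z.of_nat l2)%Z with (1 + - (y * b0) * Zn)%Z.
  - rewrite Z_mod_plus_full. apply Z.mod_small. lia.
  - rewrite <- Hxy, <- Hab. ring.
Qed.

Lemma bezout_l1_exists : exists u, (Zn | u * Z.of_nat l1 - g)%Z.
Proof.
  destruct (Z.gcd_bezout (Z.of_nat l1) Zn _ eq_refl) as [u [w Huw]].
  exists u, (- w)%Z. rewrite <- Huw. ring.
Qed.

Variable c : Z * Z.
Hypothesis c_vertex : (phi c mod Zn = 1)%Z.

Definition lift (v : nat) : Z * Z := (Z.of_nat v * fst c, Z.of_nat v * snd c)%Z.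

Lemma vertex_lift v : (v < n)%nat -> vertex (lift v) = v.
Proof.
  intros Hv. apply Nat2Z.inj. rewrite Z_of_vertex. unfold lift, phi; simpl.
  replace (Z.of_nat v * fst c * Z.of_nat l1 + Z.of_nat v * snd c * Z.of_nat l2)%Z
    with (Z.of_nat v * phi c)%Z by (unfold phi; ring).
  rewrite Z.mul_mod, c_vertex, Z.mul_1_r, Z.mod_mod by lia. apply Z.mod_small. lia.
Qed.

Lemma realization_cover f : tonnetz_realization n 3 L f -> exists w a b t1 t2,
  (a < 3)%nat /\ (b < 3)%nat /\ a <> b /\ 0 <= t1 /\ 0 <= t2 /\ t1 + t2 <= 1 /\
  f = bary_point w a b t1 t2.
Proof.
  intros Hf. pose proof Hf as [_ [_ [_ [x [sigma [Hx [[Hsigma Hinj] Hsupp]]]]]]].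
  assert (Ha : (sigma 0 < 3)%nat) by (apply Hsigma; lia).
  assert (Hb : (sigma 1 < 3)%nat) by (apply Hsigma; lia).
  assert (Hab : sigma 0%nat <> sigma 1%nat) by (intro E; apply Hinj in E; lia).
  assert (Htri : on_triangle (lift x) (sigma 0%nat) (sigma 1%nat) f).
  { intros v Hv. destruct (Hsupp v Hv) as [j [Hj ->]]. exists j. split; auto.
    rewrite vertex_vert, vertex_lift by auto. do 2 f_equal.
    destruct j as [|[|[|]]]; try lia; reflexivity. }
  destruct (realization_on_triangle _ _ _ Ha Hb Hab f Hf Htri) as [t1 [t2 [Ht1 [Ht2 [Ht ->]]]]].
  exists (lift x), (sigma 0%nat), (sigma 1%nat), t1, t2. repeat split; auto.
Qed.

(* Coordinates in the plane of a point of the realization, read off around its vertex [x]. *)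
Definition chart (f : nat -> R) (x : nat) : R * R :=
  (IZR (fst (lift x)) + Rsum (seq 0 n) (fun v => f v * IZR (fst (displacement x v))),
   IZR (snd (lift x)) + Rsum (seq 0 n) (fun v => f v * IZR (snd (displacement x v)))).

Lemma chart_bary_point w a b t1 t2 x : (a < 3)%nat -> (b < 3)%nat -> a <> b ->
  bary_point w a b t1 t2 x <> 0 -> exists k, is_period k /\
  chart (bary_point w a b t1 t2) x =
    (fst (plane_bary w a b t1 t2) + IZR (fst k), snd (plane_bary w a b t1 t2) + IZR (snd k)).
Proof.
  intros Ha Hb Hab Hx.
  destruct (bary_point_on_triangle w a b t1 t2 x Hx) as [i [Hi ->]].
  exists (psub (lift (vertex (vert w a b i))) (vert w a b i)). split.
  { apply vertex_eq_period. rewrite vertex_lift; auto using vertex_lt. }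
  unfold chart. rewrite !(Rsum_on_triangle w a b) by (auto; apply bary_point_on_triangle).
  rewrite !Rsum_cons, !Rsum_nil, !bary_point_vert, !displacement_vert by lia.
  destruct w as [w1 w2]. unfold plane_bary, tri_point, vert, psub, padd.
  cbn [fst snd bary corner]. rewrite !minus_IZR, !plus_IZR. f_equal; ring.
Qed.

Lemma Rabs_displacement_le x v :
  Rabs (IZR (fst (displacement x v))) <= 1 /\ Rabs (IZR (snd (displacement x v))) <= 1.
Proof.
  unfold displacement. destruct (star_decode_small ((Z.of_nat v - Z.of_nat x) mod Zn)) as [H1 H2].
  rewrite <- !abs_IZR. split; apply IZR_le; auto.
Qed.

Lemma chart_lipschitz f f' x : dist1 (chart f x) (chart f' x) <= 2 * INR n * distn n f f'.
Proof.
  unfold dist1, chart; cbn [fst snd].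
  match goal with |- Rabs (?p + ?s - (?p + ?s')) + Rabs (?q + ?t - (?q + ?t')) <= _ =>
    replace (p + s - (p + s')) with (s - s') by ring;
    replace (q + t - (q + t')) with (t - t') by ring
  end.
  pose proof (Rsum_weighted_distn n f f' (fun v => IZR (fst (displacement x v)))
    (fun v => proj1 (Rabs_displacement_le x v))).
  pose proof (Rsum_weighted_distn n f f' (fun v => IZR (snd (displacement x v)))
    (fun v => proj2 (Rabs_displacement_le x v))).
  lra.
Qed.

Variable u : Z.
Hypothesis u_bezout : (Zn | u * Z.of_nat l1 - g)%Z.

(* The periods form the lattice with basis [(n/g, 0)] and [(- u l2, g)]. *)
Definition basis (s : R * R) : R * R :=
  linmap (IZR (Zn / g)) (- IZR (u * Z.of_nat l2)) 0 (IZR g) s.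

Definition basis_inv (z : R * R) : R * R :=
  linmap (IZR g / IZR Zn) (IZR (u * Z.of_nat l2) / IZR Zn) 0 (/ IZR g) z.

Lemma Zn_factor : Zn = (g * (Zn / g))%Z.
Proof. apply Zdivide_Zdiv_eq; [apply gcd_pos|apply Z.gcd_divide_r]. Qed.

Lemma l1_factor : Z.of_nat l1 = (g * (Z.of_nat l1 / g))%Z.
Proof. apply Zdivide_Zdiv_eq; [apply gcd_pos|apply Z.gcd_divide_l]. Qed.

Lemma Zn_div_gcd_pos : (0 < Zn / g)%Z.
Proof. pose proof Zn_factor. pose proof gcd_pos. nia. Qed.

Lemma basis_inv_basis s : basis_inv (basis s) = s.
Proof.
  pose proof gcd_pos. pose proof Zn_div_gcd_pos.
  assert (IZR g <> 0) by (apply not_0_IZR; lia).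
  assert (IZR (Zn / g) <> 0) by (apply not_0_IZR; lia).
  assert (HN : IZR Zn = IZR g * IZR (Zn / g)) by (rewrite <- mult_IZR, <- Zn_factor; reflexivity).
  destruct s as [s1 s2]. unfold basis_inv, basis, linmap; simpl. rewrite HN. f_equal; field; auto.
Qed.

Lemma basis_basis_inv z : basis (basis_inv z) = z.
Proof.
  pose proof gcd_pos. pose proof Zn_div_gcd_pos.
  assert (IZR g <> 0) by (apply not_0_IZR; lia).
  assert (IZR (Zn / g) <> 0) by (apply not_0_IZR; lia).
  assert (HN : IZR Zn = IZR g * IZR (Zn / g)) by (rewrite <- mult_IZR, <- Zn_factor; reflexivity).
  destruct z as [z1 z2]. unfold basis_inv, basis, linmap; simpl. rewrite HN. f_equal; field; auto.
Qed.

Lemma basis_integral k1 k2 :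
  exists m, is_period m /\ basis (IZR k1, IZR k2) = (IZR (fst m), IZR (snd m)).
Proof.
  exists (k1 * (Zn / g) - k2 * (u * Z.of_nat l2), k2 * g)%Z. split.
  - destruct u_bezout as [q Hq]. unfold is_period, phi; cbn [fst snd].
    apply Z.mod_divide; [lia|]. exists (k1 * (Z.of_nat l1 / g) - k2 * Z.of_nat l2 * q)%Z.
    transitivity (k1 * ((Zn / g) * Z.of_nat l1) - k2 * Z.of_nat l2 * (u * Z.of_nat l1 - g))%Z;
      [ring|].
    rewrite Hq. pose proof l1_factor as E1. pose proof Zn_factor as E2.
    set (G := g) in *. set (A := (Z.of_nat l1 / G)%Z) in *. set (B := (Zn / G)%Z) in *.
    rewrite E1, E2. ring.
  - unfold basis, linmap; cbn [fst snd]. rewrite minus_IZR, !mult_IZR. f_equal; ring.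
Qed.

Lemma period_snd_divisible k : is_period k -> (g | snd k)%Z.
Proof.
  intros Hk. unfold is_period, phi in Hk. apply Z.mod_divide in Hk; [|lia].
  apply (Z.gauss _ (Z.of_nat l2)); [|apply gcd_l2_coprime].
  replace (Z.of_nat l2 * snd k)%Z
    with ((fst k * Z.of_nat l1 + snd k * Z.of_nat l2) - fst k * Z.of_nat l1)%Z by ring.
  apply Z.divide_sub_r.
  - eapply Z.divide_trans; [apply Z.gcd_divide_r|exact Hk].
  - apply Z.divide_mul_r, Z.gcd_divide_l.
Qed.

Lemma period_basis_coords k : is_period k -> exists m1 m2,
  snd k = (m2 * g)%Z /\ (g * fst k + u * Z.of_nat l2 * snd k = m1 * Zn)%Z.
Proof.
  intros Hk. destruct (period_snd_divisible k Hk) as [m2 Hm2].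
  set (X := (fst k + u * Z.of_nat l2 * m2)%Z).
  assert (HX : (Zn | X * Z.of_nat l1)%Z).
  { destruct u_bezout as [q Hq]. unfold is_period, phi in Hk. apply Z.mod_divide in Hk; [|lia].
    replace (X * Z.of_nat l1)%Z with (fst k * Z.of_nat l1 + snd k * Z.of_nat l2 +
      Zn * (q * Z.of_nat l2 * m2) + Z.of_nat l2 * m2 * (u * Z.of_nat l1 - g - q * Zn))%Z.
    - rewrite Hq, Z.sub_diag, Z.mul_0_r, Z.add_0_r.
      apply Z.divide_add_r; [exact Hk|apply Z.divide_factor_l].
    - unfold X. rewrite Hm2. ring. }
  assert (HX' : (Zn / g | X)%Z).
  { pose proof gcd_pos. pose proof Zn_factor as E2. pose proof l1_factor as E1.
    assert (Hcop : Z.gcd (Zn / g) (Z.of_nat l1 / g) = 1%Z)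
      by (rewrite Z.gcd_comm; apply Z.gcd_div_gcd; [lia|reflexivity]).
    set (G := g) in *. apply (Z.gauss _ (Z.of_nat l1 / G)); [|exact Hcop].
    rewrite E2, E1 in HX.
    replace (X * (G * (Z.of_nat l1 / G)))%Z with (G * (Z.of_nat l1 / G * X))%Z in HX by ring.
    apply Z.mul_divide_cancel_l in HX; [auto|lia]. }
  destruct HX' as [m1 Hm1]. exists m1, m2. split; auto.
  rewrite Zn_factor at 2. rewrite Hm2.
  transitivity (g * X)%Z; [unfold X; ring|]. rewrite Hm1. ring.
Qed.

Lemma basis_inv_period k : is_period k ->
  exists m1 m2, basis_inv (IZR (fst k), IZR (snd k)) = (IZR m1, IZR m2).
Proof.
  intros Hk. destruct (period_basis_coords k Hk) as [m1 [m2 [E2 E1]]]. exists m1, m2.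
  pose proof gcd_pos. assert (IZR g <> 0) by (apply not_0_IZR; lia).
  assert (IZR Zn <> 0) by (apply not_0_IZR; lia).
  apply (f_equal IZR) in E1. rewrite plus_IZR, !mult_IZR in E1.
  unfold basis_inv, linmap; cbn [fst snd]. f_equal.
  - transitivity ((IZR g * IZR (fst k) + IZR u * IZR (Z.of_nat l2) * IZR (snd k)) / IZR Zn).
    + rewrite mult_IZR. field; auto.
    + rewrite E1. field; auto.
  - rewrite E2, mult_IZR. field; auto.
Qed.

Lemma wrap_basis_inv_period z k : is_period k ->
  wrap (basis_inv (fst z + IZR (fst k), snd z + IZR (snd k))) = wrap (basis_inv z).
Proof.
  intros Hk. destruct (basis_inv_period k Hk) as [m1 [m2 Em]].
  unfold basis_inv. rewrite (linmap_add _ _ _ _ z (IZR (fst k), IZR (snd k))).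
  fold (basis_inv z). fold (basis_inv (IZR (fst k), IZR (snd k))). rewrite Em. apply wrap_shift.
Qed.

Lemma plane_to_complex_basis_shift s k1 k2 :
  plane_to_complex (basis (fst s + IZR k1, snd s + IZR k2)) = plane_to_complex (basis s).
Proof.
  destruct (basis_integral k1 k2) as [m [Hm Em]].
  unfold basis. rewrite (linmap_add _ _ _ _ s (IZR k1, IZR k2)).
  fold (basis s). fold (basis (IZR k1, IZR k2)). rewrite Em. apply plane_to_complex_period; auto.
Qed.

Lemma basis_lipschitz :
  exists K, 0 <= K /\ forall s s', dist1 (basis s) (basis s') <= K * dist1 s s'.
Proof.
  eexists; split; [|intros; apply linmap_lipschitz].
  pose proof (Rabs_pos (IZR (Zn / g))). pose proof (Rabs_pos (- IZR (u * Z.of_nat l2))).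
  pose proof (Rabs_pos 0). pose proof (Rabs_pos (IZR g)). lra.
Qed.

Lemma basis_inv_lipschitz :
  exists K, 0 <= K /\ forall z z', dist1 (basis_inv z) (basis_inv z') <= K * dist1 z z'.
Proof.
  eexists; split; [|intros; apply linmap_lipschitz].
  pose proof (Rabs_pos (IZR g / IZR Zn)). pose proof (Rabs_pos (IZR (u * Z.of_nat l2) / IZR Zn)).
  pose proof (Rabs_pos 0). pose proof (Rabs_pos (/ IZR g)). lra.
Qed.

(* Well defined: charts around different vertices differ by periods, which [basis_inv] turns
   into integer vectors, invisible on the torus. *)
Definition to_torus (f : nat -> R) : R4 :=
  wrap (basis_inv (chart f (first_nonzero f (seq 0 n)))).

Definition from_torus (q : R4) : nat -> R := plane_to_complex (basis (angles q)).

Lemma wrap_chart_bary_point w a b t1 t2 v : (a < 3)%nat -> (b < 3)%nat -> a <> b ->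
  bary_point w a b t1 t2 v <> 0 ->
  wrap (basis_inv (chart (bary_point w a b t1 t2) v)) = wrap (basis_inv (plane_bary w a b t1 t2)).
Proof.
  intros Ha Hb Hab Hv. destruct (chart_bary_point w a b t1 t2 v Ha Hb Hab Hv) as [k [Hk ->]].
  apply wrap_basis_inv_period; auto.
Qed.

Lemma to_torus_bary_point w a b t1 t2 : (a < 3)%nat -> (b < 3)%nat -> a <> b ->
  to_torus (bary_point w a b t1 t2) = wrap (basis_inv (plane_bary w a b t1 t2)).
Proof.
  intros Ha Hb Hab. apply wrap_chart_bary_point; auto.
  apply first_nonzero_spec. rewrite bary_point_sum by auto. lra.
Qed.

Lemma to_torus_chart f v : tonnetz_realization n 3 L f -> f v <> 0 ->
  to_torus f = wrap (basis_inv (chart f v)).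
Proof.
  intros Hf Hv.
  destruct (realization_cover f Hf) as [w [a [b [t1 [t2 [Ha [Hb [Hab [_ [_ [_ ->]]]]]]]]]]].
  rewrite to_torus_bary_point, wrap_chart_bary_point; auto.
Qed.

Lemma from_torus_to_torus f : tonnetz_realization n 3 L f -> from_torus (to_torus f) = f.
Proof.
  intros Hf.
  destruct (realization_cover f Hf) as [w [a [b [t1 [t2 [Ha [Hb [Hab [Ht1 [Ht2 [Ht ->]]]]]]]]]]].
  unfold from_torus. rewrite to_torus_bary_point by auto.
  destruct (angles_wrap (basis_inv (plane_bary w a b t1 t2))) as [k1 [k2 ->]].
  unfold Rminus. rewrite <- !opp_IZR, plane_to_complex_basis_shift, basis_basis_inv.
  apply plane_to_complex_bary; auto.
Qed.

Lemma to_torus_from_torus q : torus2 q -> to_torus (from_torus q) = q.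
Proof.
  intros Hq. unfold from_torus.
  destruct (plane_bary_cover (basis (angles q)))
    as [w [a [b [t1 [t2 [Ha [Hb [Hab [Ht1 [Ht2 [Ht Hz]]]]]]]]]]].
  rewrite Hz, plane_to_complex_bary, to_torus_bary_point by auto.
  rewrite <- Hz, basis_inv_basis. apply wrap_angles; auto.
Qed.

Lemma realization_first_nonzero f : tonnetz_realization n 3 L f ->
  (first_nonzero f (seq 0 n) < n)%nat /\ 0 < f (first_nonzero f (seq 0 n)).
Proof.
  intros [Hnn [_ [Hsum _]]]. change (Rsum (seq 0 n) f = 1) in Hsum.
  destruct (first_nonzero_spec f (seq 0 n)) as [Hin Hne]; [lra|].
  apply in_seq in Hin. pose proof (Hnn (first_nonzero f (seq 0 n))). split; [lia|lra].
Qed.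

Lemma to_torus_continuous : cont_on (distn n) dist4 (tonnetz_realization n 3 L) to_torus.
Proof.
  intros f Hf eps Heps. destruct (realization_first_nonzero f Hf) as [Hvn Hv].
  set (v := first_nonzero f (seq 0 n)) in *.
  destruct basis_inv_lipschitz as [K [HK HbK]]. pose proof PI_RGT_0. pose proof (pos_INR n).
  set (C := 2 * PI * K * (2 * INR n)).
  assert (HC : 0 <= C) by (unfold C; assert (0 <= PI * K) by nra; nra).
  exists (Rmin (f v) (eps / (C + 1))). split.
  { apply Rmin_case; [lra|apply Rdiv_lt_0_compat; lra]. }
  intros f' Hf' Hd.
  pose proof (Rmin_l (f v) (eps / (C + 1))). pose proof (Rmin_r (f v) (eps / (C + 1))).
  pose proof (distn_component n f f' v Hvn) as Hdv.
  assert (Hv' : f' v <> 0).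
  { intro E. rewrite E, Rminus_0_r, Rabs_right in Hdv by lra. lra. }
  rewrite (to_torus_chart f v Hf (Rgt_not_eq _ _ Hv)), (to_torus_chart f' v Hf' Hv').
  eapply Rle_lt_trans; [apply dist4_wrap|].
  assert (Hchart := chart_lipschitz f f' v). pose proof (dist1_nonneg (chart f v) (chart f' v)).
  pose proof (HbK (chart f v) (chart f' v)).
  apply Rle_lt_trans with (C * distn n f f').
  - assert (K * dist1 (chart f v) (chart f' v) <= K * (2 * INR n * distn n f f'))
      by (apply Rmult_le_compat_l; lra).
    replace (C * distn n f f') with (2 * PI * (K * (2 * INR n * distn n f f'))) by (unfold C; ring).
    apply Rmult_le_compat_l; lra.
  - apply lipschitz_bound_lt; auto; [pose proof (Rabs_pos (f v - f' v)); lra|lra].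
Qed.

Lemma from_torus_continuous : cont_on dist4 (distn n) torus2 from_torus.
Proof.
  intros [[a1 b1] [a2 b2]] [H1 H2] eps Heps.
  destruct basis_lipschitz as [K [HK HbK]].
  set (eta := eps / (16 * K + 1) / 2).
  assert (Heta : 0 < eta) by (unfold eta; apply Rdiv_lt_0_compat; [apply Rdiv_lt_0_compat|]; lra).
  destruct (angle_continuous_mod_Z a1 b1 eta H1 Heta) as [d1 [Hd1 A1]].
  destruct (angle_continuous_mod_Z a2 b2 eta H2 Heta) as [d2 [Hd2 A2]].
  exists (Rmin d1 d2). split; [apply Rmin_case; lra|].
  intros [[a1' b1'] [a2' b2']] [H1' H2'] Hd.
  pose proof (Rmin_l d1 d2). pose proof (Rmin_r d1 d2).
  destruct (dist4_components a1 b1 a2 b2 a1' b1' a2' b2') as [E1 [E2 [E3 E4]]].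
  rewrite Rabs_minus_sym in E1, E2, E3, E4.
  destruct (A1 a1' b1' H1' ltac:(lra) ltac:(lra)) as [k1 K1].
  destruct (A2 a2' b2' H2' ltac:(lra) ltac:(lra)) as [k2 K2].
  set (s := angles (a1, b1, (a2, b2))).
  set (r := (fst s + (angle a1' b1' - angle a1 b1 - IZR k1),
             snd s + (angle a2' b2' - angle a2 b2 - IZR k2))).
  assert (Hq' : from_torus (a1', b1', (a2', b2')) = plane_to_complex (basis r)).
  { unfold from_torus. rewrite <- (plane_to_complex_basis_shift r k1 k2). f_equal. f_equal.
    unfold r, s; simpl. f_equal; ring. }
  rewrite Hq'. apply distn_lt; auto. intros v _.
  eapply Rle_lt_trans; [apply plane_to_complex_lipschitz|].
  pose proof (HbK s r). pose proof (dist1_nonneg (basis s) (basis r)).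
  assert (Hsr : dist1 s r < eps / (16 * K + 1)).
  { replace (dist1 s r) with (Rabs (angle a1' b1' - angle a1 b1 - IZR k1) +
      Rabs (angle a2' b2' - angle a2 b2 - IZR k2)).
    - replace (eps / (16 * K + 1)) with (2 * eta) by (unfold eta; field; lra). lra.
    - unfold dist1, r; cbn [fst snd]. rewrite <- (Rabs_Ropp (angle a1' b1' - _ - _)),
        <- (Rabs_Ropp (angle a2' b2' - _ - _)). f_equal; f_equal; ring. }
  apply Rle_lt_trans with (16 * (K * dist1 s r)).
  - fold s. apply Rmult_le_compat_l; lra.
  - rewrite <- Rmult_assoc. apply lipschitz_bound_lt; [lra|apply dist1_nonneg|].
    exact Hsr.
Qed.

End Coordinates.

Theorem tonnetz_triangulates_torus2 :
  reduced 3 L -> triangulates_torus2 n (tonnetz_realization n 3 L).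
Proof.
  intros Hred.
  destruct (vertex_one_exists Hred) as [c Hc], bezout_l1_exists as [u Hu].
  exists (to_torus c u), (from_torus u). split; [|split; [|split; [|split; [|split]]]].
  - intros f _. apply wrap_torus2.
  - intros q _. apply plane_to_complex_realization.
  - intros f Hf. eapply from_torus_to_torus; eauto.
  - intros q Hq. eapply to_torus_from_torus; eauto.
  - eapply to_torus_continuous; eauto.
  - eapply from_torus_continuous; eauto.
Qed.

End Tonnetz.

Theorem proposition2p4 (n l1 l2 l3 : nat) :
  (0 < l1)%nat -> (0 < l2)%nat -> (0 < l3)%nat ->
  (l1 + l2 + l3)%nat = n ->
  generic 3 (L3 l1 l2 l3) ->
  reduced 3 (L3 l1 l2 l3) ->
  triangulates_torus2 n (tonnetz_realization n 3 (L3 l1 l2 l3)).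
Proof.
  intros Hl1 Hl2 Hl3 <- Hgen Hred. apply tonnetz_triangulates_torus2; assumption.
Qed.
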